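(* Let $F:S_N\times\mathbb{R}^N\times\mathbb{R}\to\mathbb{R}$ (independent of $x$) satisfy (H0), (H1) and (H3), and let $l:\mathbb{R}^N\to S_N$ be a linear map. Then the function $g:\mathbb{R}^N\to\mathbb{R}$, $g(p)=F\big(l(p)+p\otimes p,\ p,\ 1\big)$, is convex.
   Context: $S_N$ is the space of real symmetric $N\times N$ matrices and $p\otimes p$ is the matrix $(p_ip_j)_{i,j}$. For $0<\lambda\le\Lambda$, $\mathcal M^\pm$ are the Pucci operators ($\sup$/$\inf$ of $\mathrm{tr}(AM)$ over $A\in S_N$ with eigenvalues in $[\lambda,\Lambda]$). Hypotheses (for $x$-independent $F$): (H0) $F(sM,sp,su)=sF(M,p,u)$ for $s\ge0$; (H1) for some $\gamma,\delta\ge0$: $\mathcal M^-(M-M')-\gamma|p-q|-\delta|u-v|\le F(M,p,u)-F(M',q,v)\le\mathcal M^+(M-M')+\gamma|p-q|+\delta|u-v|$ for all arguments; (H3) with $G(M,p,u)=-F(-M,-p,-u)$: $G(M-M',p-q,u-v)\le F(M,p,u)-F(M',q,v)\le F(M-M',p-q,u-v)$. *)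

From Stdlib Require Import Reals ClassicalEpsilon.
From mathcomp Require Import ssreflect ssrfun ssrbool eqtype ssrnat seq fintype.
Set Implicit Arguments.
Open Scope R_scope.

Definition Vec (N : nat) := 'I_N -> R.
Definition Mat (N : nat) := 'I_N -> 'I_N -> R.

Definition sumI (N : nat) (f : 'I_N -> R) : R :=
  foldr (fun i acc => f i + acc) 0 (enum 'I_N).

Definition symmetric (N : nat) (M : Mat N) : Prop := forall i j, M i j = M j i.

Definition mat_sub N (M M' : Mat N) : Mat N := fun i j => M i j - M' i j.
Definition mat_add N (M M' : Mat N) : Mat N := fun i j => M i j + M' i j.
Definition mat_opp N (M : Mat N) : Mat N := fun i j => - M i j.
Definition mat_scale N (s : R) (M : Mat N) : Mat N := fun i j => s * M i j.
Definition vec_sub N (p q : Vec N) : Vec N := fun i => p i - q i.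
Definition vec_opp N (p : Vec N) : Vec N := fun i => - p i.
Definition vec_scale N (s : R) (p : Vec N) : Vec N := fun i => s * p i.
Definition vec_add N (p q : Vec N) : Vec N := fun i => p i + q i.

Definition vnorm N (p : Vec N) : R := sqrt (sumI (fun i => p i * p i)).

Definition tensor N (p : Vec N) : Mat N := fun i j => p i * p j.

Definition trace N (M : Mat N) : R := sumI (fun i => M i i).
Definition mat_mul N (A M : Mat N) : Mat N := fun i j => sumI (fun k => A i k * M k j).

Definition eigenvalue N (A : Mat N) (a : R) : Prop :=
  exists v : Vec N, (exists i, v i <> 0) /\
    forall i, sumI (fun j => A i j * v j) = a * v i.

Definition pucci_class N (lam Lam : R) (A : Mat N) : Prop :=
  symmetric A /\ forall a, eigenvalue A a -> lam <= a <= Lam.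

Definition pucci_values N (lam Lam : R) (M : Mat N) : R -> Prop :=
  fun x => exists A, pucci_class lam Lam A /\ x = trace (mat_mul A M).

Definition is_glb (E : R -> Prop) (m : R) : Prop :=
  (forall x, E x -> m <= x) /\ (forall b, (forall x, E x -> b <= x) -> b <= m).

Definition pucci_plus N (lam Lam : R) (M : Mat N) : R :=
  epsilon (inhabits 0) (fun s => is_lub (pucci_values lam Lam M) s).
Definition pucci_minus N (lam Lam : R) (M : Mat N) : R :=
  epsilon (inhabits 0) (fun s => is_glb (pucci_values lam Lam M) s).

Definition H0 N (F : Mat N -> Vec N -> R -> R) : Prop :=
  forall (s : R) M p u, 0 <= s -> symmetric M ->
    F (mat_scale s M) (vec_scale s p) (s * u) = s * F M p u.

Definition H1 N (lam Lam gamma delta : R) (F : Mat N -> Vec N -> R -> R) : Prop :=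
  forall M M' p q u v, symmetric M -> symmetric M' ->
    pucci_minus lam Lam (mat_sub M M') - gamma * vnorm (vec_sub p q)
      - delta * Rabs (u - v) <= F M p u - F M' q v /\
    F M p u - F M' q v <= pucci_plus lam Lam (mat_sub M M')
      + gamma * vnorm (vec_sub p q) + delta * Rabs (u - v).

Definition Gop N (F : Mat N -> Vec N -> R -> R) : Mat N -> Vec N -> R -> R :=
  fun M p u => - F (mat_opp M) (vec_opp p) (- u).

Definition H3 N (F : Mat N -> Vec N -> R -> R) : Prop :=
  forall M M' p q u v, symmetric M -> symmetric M' ->
    Gop F (mat_sub M M') (vec_sub p q) (u - v) <= F M p u - F M' q v /\
    F M p u - F M' q v <= F (mat_sub M M') (vec_sub p q) (u - v).

Definition linear_to_sym N (l : Vec N -> Mat N) : Prop :=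
  (forall p, symmetric (l p)) /\
  (forall a b p q, l (vec_add (vec_scale a p) (vec_scale b q))
                   = mat_add (mat_scale a (l p)) (mat_scale b (l q))).

Definition convex_fun N (g : Vec N -> R) : Prop :=
  forall p q (t : R), 0 <= t <= 1 ->
    g (vec_add (vec_scale t p) (vec_scale (1 - t) q)) <= t * g p + (1 - t) * g q.

From Pilot Require Import Defs.
From Stdlib Require Import Reals.
From mathcomp Require Import ssreflect ssrfun ssrbool eqtype ssrnat seq fintype.
From Stdlib Require Import ClassicalEpsilon FunctionalExtensionality Lra Psatz.
Open Scope R_scope.
Set Implicit Arguments.

(* By (H0) and (H3), F is sublinear: positively homogeneous and
   F(A+B, p+q, u+v) <= F(A,p,u) + F(B,q,v).  Writing X(p) = l(p) + p (x) p and
   r = tp + (1-t)q, linearity of l gives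
     X(r) = t X(p) + (1-t) X(q) - t(1-t) (p-q) (x) (p-q),
   so g(r) <= t g(p) + (1-t) g(q) + F(-t(1-t) (p-q) (x) (p-q), 0, 0).  By (H1) the
   last term is at most M^+ of a negative semidefinite matrix, which is <= 0
   because every matrix of the Pucci class is positive semidefinite: a symmetric
   matrix attains its least Rayleigh quotient at an eigenvector.  That in turn
   follows, by induction on the dimension through Schur complements, from the
   fact that a positive semidefinite matrix is either singular or coercive. *)

Section Sums.

Lemma sumI_lift n (f : 'I_n.+1 -> R) :
  sumI f = f ord0 + sumI (fun j : 'I_n => f (lift ord0 j)).
Proof.
rewrite /sumI enum_ordSl /=; congr (_ + _).
by elim: (enum 'I_n) => [|a s /= ->].
Qed.

Lemma sumI_ord0 (f : 'I_0 -> R) : sumI f = 0.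
Proof. by rewrite /sumI; case: (enum 'I_0) (size_enum_ord 0). Qed.

Variable N : nat.
Implicit Types f g : 'I_N -> R.

Lemma eq_sumI f g : (forall i, f i = g i) -> sumI f = sumI g.
Proof. by move=> fg; rewrite /sumI; elim: (enum 'I_N) => //= a s ->; rewrite fg. Qed.

Lemma sumI_add f g : sumI (fun i => f i + g i) = sumI f + sumI g.
Proof. by rewrite /sumI; elim: (enum 'I_N) => /= [|a s ->]; lra. Qed.

Lemma sumI_scal c f : sumI (fun i => c * f i) = c * sumI f.
Proof. by rewrite /sumI; elim: (enum 'I_N) => /= [|a s ->]; lra. Qed.

Lemma sumI_const0 : sumI (fun _ : 'I_N => 0) = 0.
Proof. by rewrite /sumI; elim: (enum 'I_N) => /= [|a s ->]; lra. Qed.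

Lemma ler_sumI f g : (forall i, f i <= g i) -> sumI f <= sumI g.
Proof.
move=> fg; rewrite /sumI; elim: (enum 'I_N) => /= [|a s IH]; first lra.
by have := fg a; lra.
Qed.

Lemma sumI_ge0 f : (forall i, 0 <= f i) -> 0 <= sumI f.
Proof. by move=> f_ge0; rewrite -sumI_const0; apply: ler_sumI. Qed.

Lemma sumI_ge_term f i : (forall j, 0 <= f j) -> f i <= sumI f.
Proof.
move=> f_ge0; rewrite /sumI; have : i \in enum 'I_N by rewrite mem_enum.
elim: (enum 'I_N) => //= a s IH; rewrite in_cons => /orP [/eqP <-|/IH].
- suff : 0 <= foldr (fun j acc => f j + acc) 0 s by lra.
  by elim: s {IH} => /= [|b s' IH']; [lra | have := f_ge0 b; lra].
- by have := f_ge0 a; lra.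
Qed.

End Sums.

Lemma sumI_delta N (f : 'I_N -> R) i : (forall j, j <> i -> f j = 0) -> sumI f = f i.
Proof.
elim: N f i => [|n IH] f i f0; first by have := ltn_ord i.
have lift_neq0 j : lift ord0 j <> ord0 by move=> E; have := neq_lift ord0 j; rewrite E eqxx.
rewrite sumI_lift; case: (unliftP ord0 i) f0 => [j ->|->] f0.
- rewrite (IH _ j) => [|k kj]; last by apply: f0 => /lift_inj.
  by rewrite f0 //; lra.
- by rewrite (@eq_sumI _ _ (fun _ => 0)) ?sumI_const0 => [|j]; [lra | apply: f0].
Qed.

Definition dot N (x y : Vec N) : R := sumI (fun i => x i * y i).
Definition mv N (B : Mat N) (x : Vec N) : Vec N := fun i => sumI (fun j => B i j * x j).
Definition qf N (B : Mat N) (x : Vec N) : R := dot x (mv B x).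
Definition psd N (B : Mat N) : Prop := forall x, 0 <= qf B x.

Section DotProduct.

Variable N : nat.
Implicit Types x y v : Vec N.

Lemma dot_ge0 x : 0 <= dot x x.
Proof. by apply: sumI_ge0 => i; nra. Qed.

Lemma sqr_le_dot x i : x i * x i <= dot x x.
Proof. by apply: (sumI_ge_term (fun j => x j * x j)) => j; nra. Qed.

Lemma dot_self_eq0 x : dot x x = 0 -> forall i, x i = 0.
Proof. by move=> x0 i; have := sqr_le_dot x i; nra. Qed.

Lemma dot0r x : dot x (fun _ => 0) = 0.
Proof. by rewrite /dot (@eq_sumI _ _ (fun _ => 0)) ?sumI_const0 // => i; lra. Qed.

Lemma qf_eq0 (B : Mat N) x : (forall i, x i = 0) -> qf B x = 0.
Proof.
move=> x0; rewrite /qf /dot (@eq_sumI _ _ (fun _ => 0)) ?sumI_const0 // => i.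
by rewrite x0; lra.
Qed.

Lemma cauchy_schwarz v y : dot v y * dot v y <= dot v v * dot y y.
Proof.
have quad s : s * s * dot v v - 2 * s * dot v y + dot y y
              = sumI (fun i => (s * v i - y i) * (s * v i - y i)).
  rewrite (@eq_sumI _ _ (fun i => (s * s) * (v i * v i)
                                 + ((- (2 * s)) * (v i * y i) + y i * y i))) => [|i]; last ring.
  by rewrite !sumI_add !sumI_scal /dot; ring.
have quad_ge0 s : 0 <= s * s * dot v v - 2 * s * dot v y + dot y y.
  by rewrite quad; apply: sumI_ge0 => i; apply: Rle_0_sqr.
case: (Req_dec (dot v v) 0) => [v0 | v_neq0].
  have -> : dot v y = 0.
    rewrite /dot (@eq_sumI _ _ (fun _ => 0)) ?sumI_const0 // => i.
    by rewrite (dot_self_eq0 _ v0); lra.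
  by rewrite v0; lra.
have V_gt0 : 0 < dot v v by have := dot_ge0 v; lra.
have := quad_ge0 (dot v y / dot v v).
have -> : dot v y / dot v v * (dot v y / dot v v) * dot v v - 2 * (dot v y / dot v v) * dot v y
          + dot y y = (dot v v * dot y y - dot v y * dot v y) / dot v v by field.
by move=> /(Rmult_le_pos _ _ (Rlt_le _ _ V_gt0)); rewrite /Rdiv Rmult_comm Rmult_assoc Rinv_l; lra.
Qed.

Lemma qf_bounded_below (B : Mat N) : exists K, forall x, - (K * dot x x) <= qf B x.
Proof.
exists (sumI (fun i => sumI (fun j => Rabs (B i j))))=> x; set D := dot x x.
have -> : - (sumI (fun i => sumI (fun j => Rabs (B i j))) * D)
          = sumI (fun i => sumI (fun j => - D * Rabs (B i j))).
  transitivity (- D * sumI (fun i => sumI (fun j => Rabs (B i j)))); first ring.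
  by rewrite -sumI_scal; apply: eq_sumI => i; rewrite sumI_scal.
rewrite /qf /dot /mv; apply: ler_sumI => i; rewrite -sumI_scal; apply: ler_sumI => j.
have := sqr_le_dot x i; have := sqr_le_dot x j; rewrite -/D => xi xj.
have : Rabs (x i * x j) <= D.
  by apply: Rabs_le; split; nra.
rewrite Rabs_mult => xij.
have := Rabs_pos (B i j); have := Rabs_pos (x i); have := Rabs_pos (x j).
have := Rle_abs (- (B i j * (x i * x j))).
rewrite Rabs_Ropp !Rabs_mult; nra.
Qed.

End DotProduct.

Definition nontrivial_kernel N (B : Mat N) : Prop :=
  exists x : Vec N, (exists i, x i <> 0) /\ forall i, mv B x i = 0.

Definition coercive N (B : Mat N) : Prop :=
  exists e, 0 < e /\ forall x, e * dot x x <= qf B x.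

Definition vcons n (a : R) (y : Vec n) : Vec n.+1 :=
  fun i => if unlift ord0 i is Some j then y j else a.
Definition minor n (B : Mat n.+1) : Mat n := fun i j => B (lift ord0 i) (lift ord0 j).
Definition row0 n (B : Mat n.+1) : Vec n := fun j => B ord0 (lift ord0 j).
Definition schur n (B : Mat n.+1) : Mat n :=
  fun i j => minor B i j - row0 B i * row0 B j / B ord0 ord0.

Section Block.

Variable n : nat.
Implicit Types (a : R) (y : Vec n) (x : Vec n.+1).

Lemma vcons0 a y : vcons a y ord0 = a.
Proof. by rewrite /vcons unlift_none. Qed.

Lemma vconsS a y j : vcons a y (lift ord0 j) = y j.
Proof. by rewrite /vcons liftK. Qed.

Lemma vcons_eta x : x = vcons (x ord0) (fun j => x (lift ord0 j)).
Proof.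
apply: functional_extensionality => i.
by case: (unliftP ord0 i) => [j ->|->]; rewrite ?vcons0 ?vconsS.
Qed.

Lemma dot_vcons a y b z : dot (vcons a y) (vcons b z) = a * b + dot y z.
Proof. by rewrite /dot sumI_lift !vcons0; under eq_sumI do rewrite !vconsS. Qed.

Variable B : Mat n.+1.
Hypothesis symB : Defs.symmetric B.
Local Notation b := (B ord0 ord0).
Local Notation v := (row0 B).

Lemma mv_vcons0 a y : mv B (vcons a y) ord0 = b * a + dot v y.
Proof. by rewrite /mv sumI_lift vcons0; under eq_sumI do rewrite vconsS. Qed.

Lemma mv_vconsS a y i : mv B (vcons a y) (lift ord0 i) = v i * a + mv (minor B) y i.
Proof. by rewrite /mv sumI_lift vcons0 symB; under eq_sumI do rewrite vconsS. Qed.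

Lemma qf_vcons a y : qf B (vcons a y) = b * (a * a) + 2 * a * dot v y + qf (minor B) y.
Proof.
rewrite /qf /dot sumI_lift vcons0 mv_vcons0.
under eq_sumI do rewrite vconsS mv_vconsS.
rewrite (@eq_sumI _ _ (fun i => a * (v i * y i) + y i * mv (minor B) y i)) => [|i]; last ring.
by rewrite sumI_add sumI_scal; rewrite /dot; ring.
Qed.

Lemma mv_schur y i : mv (schur B) y i = mv (minor B) y i - v i * (dot v y / b).
Proof.
rewrite /mv /schur /dot.
rewrite (@eq_sumI _ _ (fun j => minor B i j * y j + (- (v i / b)) * (v j * y j))) => [|j].
  by rewrite sumI_add sumI_scal; rewrite /Rdiv; ring.
by rewrite /Rdiv; ring.
Qed.

Lemma qf_schur y : qf (schur B) y = qf (minor B) y - dot v y * dot v y / b.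
Proof.
rewrite /qf {1}/dot.
rewrite (@eq_sumI _ _ (fun i => y i * mv (minor B) y i + (- (dot v y / b)) * (v i * y i))).
  by rewrite sumI_add sumI_scal; rewrite /dot /Rdiv; ring.
by move=> i; rewrite mv_schur; ring.
Qed.

Lemma qf_vcons_schur a y : b <> 0 ->
  qf B (vcons a y) = b * ((a + dot v y / b) * (a + dot v y / b)) + qf (schur B) y.
Proof. by move=> b0; rewrite qf_vcons qf_schur; field. Qed.

Lemma schur_sym : Defs.symmetric (schur B).
Proof. by move=> i j; rewrite /schur /minor symB; lra. Qed.

Lemma psd_schur : b <> 0 -> psd B -> psd (schur B).
Proof.
move=> b0 psdB y; have := psdB (vcons (- (dot v y / b)) y).
by rewrite qf_vcons_schur // Rplus_opp_l !Rmult_0_l Rmult_0_r Rplus_0_l.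
Qed.

Lemma kernel_schur y : b <> 0 -> (forall i, mv (schur B) y i = 0) ->
  forall i, mv B (vcons (- (dot v y / b)) y) i = 0.
Proof.
move=> b0 ker i; case: (unliftP ord0 i) => [j ->|->].
- by rewrite mv_vconsS; have := ker j; rewrite mv_schur; lra.
- by rewrite mv_vcons0; field.
Qed.

Lemma psd_corner0_row0 : psd B -> b = 0 -> forall j, v j = 0.
Proof.
move=> psdB b0; apply: dot_self_eq0.
set Q := qf (minor B) v; apply: Rle_antisym; last exact: dot_ge0.
apply: Rnot_lt_le => vv_gt0.
have := psdB (vcons (- (Rabs Q + 1) / (2 * dot v v)) v); rewrite qf_vcons -/Q b0.
have -> : 2 * (- (Rabs Q + 1) / (2 * dot v v)) * dot v v = - (Rabs Q + 1) by field; lra.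
by have := Rle_abs Q; lra.
Qed.

Lemma coercive_schur : 0 < b -> coercive (schur B) -> coercive B.
Proof.
move=> b_gt0 [e [e_gt0 coerS]].
have K_ge1 : 1 <= 2 * dot v v / (b * b) + 1.
  suff : 0 <= 2 * dot v v / (b * b) by lra.
  by apply: Rmult_le_pos; [have := dot_ge0 v; lra | apply/Rlt_le/Rinv_0_lt_compat; nra].
set K := 2 * dot v v / (b * b) + 1 in K_ge1 *.
have p_gt0 : 0 < 2 / b by apply: Rdiv_lt_0_compat; lra.
have r_gt0 : 0 < K / e by apply: Rdiv_lt_0_compat; lra.
exists (/ (2 / b + K / e)); split; first by apply: Rinv_0_lt_compat; lra.
move=> x; rewrite (vcons_eta x) qf_vcons_schur ?dot_vcons; last lra.
set a := x ord0; set y := fun j => x (lift ord0 j).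
set u := dot v y; set Y := dot y y; set q := qf (schur B) y; set z := a + u / b.
have Y_ge0 : 0 <= Y by apply: dot_ge0.
have q_ge : e * Y <= q by apply: coerS.
have u2 : u / b * (u / b) <= (K - 1) / 2 * Y.
  have -> : u / b * (u / b) = (u * u) / (b * b) by field; lra.
  have -> : (K - 1) / 2 * Y = (dot v v * Y) / (b * b) by rewrite /K; field; lra.
  apply: Rmult_le_compat_r; first by apply/Rlt_le/Rinv_0_lt_compat; nra.
  exact: cauchy_schwarz.
have a2 : a * a <= 2 * (z * z) + (K - 1) * Y.
  have -> : a = z - u / b by rewrite /z; ring.
  have := Rle_0_sqr (z + u / b); rewrite /Rsqr; nra.
have pb : 2 / b * b = 2 by field; lra.
have re : K / e * e = K by field; lra.
have bound : a * a + Y <= (2 / b + K / e) * (b * (z * z) + q).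
  have h1 : 0 <= 2 / b * q by apply: Rmult_le_pos; nra.
  have h2 : 0 <= K / e * b * (z * z) by apply: Rmult_le_pos; [nra | apply: Rle_0_sqr].
  have h3 : K / e * e * Y <= K / e * q by rewrite Rmult_assoc; apply: Rmult_le_compat_l; lra.
  have -> : (2 / b + K / e) * (b * (z * z) + q)
            = 2 / b * b * (z * z) + K / e * b * (z * z) + 2 / b * q + K / e * q by ring.
  rewrite re in h3; rewrite pb; lra.
apply: (Rmult_le_reg_l (2 / b + K / e)); first lra.
by rewrite -Rmult_assoc Rinv_r; lra.
Qed.

End Block.

Lemma psd_kernel_or_coercive N (B : Mat N) : Defs.symmetric B -> psd B ->
  nontrivial_kernel B \/ coercive B.
Proof.
elim: N B => [|n IH] B symB psdB.
  by right; exists 1; split=> [|x]; rewrite /qf /dot ?sumI_ord0; lra.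
have [b0 | b_gt0] : B ord0 ord0 = 0 \/ 0 < B ord0 ord0.
  by have := psdB (vcons 1 (fun _ => 0)); rewrite qf_vcons // dot0r qf_eq0 //; lra.
- left; exists (vcons 1 (fun _ => 0)); split; first by exists ord0; rewrite vcons0; lra.
  have row0_eq0 := psd_corner0_row0 symB psdB b0.
  move=> i; case: (unliftP ord0 i) => [j ->|->].
  + rewrite mv_vconsS // row0_eq0 /mv (@eq_sumI _ _ (fun _ => 0)) ?sumI_const0 => [|k]; lra.
  + by rewrite mv_vcons0 // b0 dot0r; lra.
- have b_neq0 : B ord0 ord0 <> 0 by lra.
  case: (IH _ (schur_sym symB) (psd_schur symB b_neq0 psdB)) => [[y [[i yi] ker]] | coerS].
  + left; exists (vcons (- (dot (row0 B) y / B ord0 ord0)) y); split.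
      by exists (lift ord0 i); rewrite vconsS.
    exact: kernel_schur.
  + by right; apply: coercive_schur.
Qed.

Definition shift_diag N (A : Mat N) (t : R) : Mat N :=
  fun i j => A i j + (if i == j then t else 0).

Section Shift.

Variables (N : nat) (A : Mat N) (t : R).

Lemma mv_shift_diag x i : mv (shift_diag A t) x i = mv A x i + t * x i.
Proof.
rewrite /mv /shift_diag.
rewrite (@eq_sumI _ _ (fun j => A i j * x j + (if i == j then t else 0) * x j)) => [|j];
  last ring.
rewrite sumI_add [X in _ + X](@sumI_delta _ _ i) ?eqxx // => j ji.
have /negbTE -> : i != j by apply/eqP => ij; apply: ji.
by rewrite Rmult_0_l.
Qed.

Lemma qf_shift_diag x : qf (shift_diag A t) x = qf A x + t * dot x x.
Proof.
rewrite /qf {1}/dot (@eq_sumI _ _ (fun i => x i * mv A x i + t * (x i * x i))).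
  by rewrite sumI_add sumI_scal.
by move=> i; rewrite mv_shift_diag; ring.
Qed.

Lemma shift_diag_sym : Defs.symmetric A -> Defs.symmetric (shift_diag A t).
Proof. by move=> symA i j; rewrite /shift_diag symA eq_sym. Qed.

End Shift.

(* The least Rayleigh quotient is attained: it is the supremum [mu] of the
   admissible lower bounds, and [A - mu] is positive semidefinite but not
   coercive, hence singular. *)
Lemma min_eigenvalue N (A : Mat N) (x0 : Vec N) : Defs.symmetric A -> 0 < dot x0 x0 ->
  exists mu, eigenvalue A mu /\ forall x, mu * dot x x <= qf A x.
Proof.
move=> symA x0_gt0.
pose U s := forall x, s * dot x x <= qf A x.
have U_bounded : bound U.
  exists (qf A x0 / dot x0 x0) => s Us; have := Us x0.
  by move=> le; apply: (Rmult_le_reg_r (dot x0 x0)) => //; rewrite /Rdiv Rmult_assoc Rinv_l; lra.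
have U_nonempty : exists s, U s.
  by have [K HK] := qf_bounded_below A; exists (- K) => x; have := HK x; lra.
have [mu [ub_mu lub_mu]] := completeness U U_bounded U_nonempty.
have U_mu : U mu.
  move=> x; case: (Req_dec (dot x x) 0) => [xx0 | /(conj (dot_ge0 x)) [x_ge0 x_neq0]].
    by rewrite xx0 qf_eq0 ?Rmult_0_r; [lra | apply: dot_self_eq0].
  have x_gt0 : 0 < dot x x by lra.
  suff : mu <= qf A x / dot x x.
    by move=> le; have := Rmult_le_compat_r _ _ _ x_ge0 le; rewrite /Rdiv Rmult_assoc Rinv_l; lra.
  apply: lub_mu => s Us; have := Us x.
  by move=> le; apply: (Rmult_le_reg_r (dot x x)) => //; rewrite /Rdiv Rmult_assoc Rinv_l; lra.
have psd_shift : psd (shift_diag A (- mu)).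
  by move=> x; rewrite qf_shift_diag; have := U_mu x; lra.
case: (psd_kernel_or_coercive (shift_diag_sym (- mu) symA) psd_shift).
- move=> [x [nz ker]]; exists mu; split => //; exists x; split => // i.
  by have := ker i; rewrite mv_shift_diag /mv; lra.
- move=> [e [e_gt0 coer]]; have : U (mu + e).
    by move=> x; have := coer x; rewrite qf_shift_diag; lra.
  by move/ub_mu; lra.
Qed.

Lemma qf_ge_eigenvalue_lb N (A : Mat N) lam : Defs.symmetric A ->
  (forall a, eigenvalue A a -> lam <= a) -> forall x, lam * dot x x <= qf A x.
Proof.
move=> symA lb x; case: (Req_dec (dot x x) 0) => [x0 | x_neq0].
  by rewrite x0 qf_eq0 ?Rmult_0_r; [lra | apply: dot_self_eq0].
have x_gt0 : 0 < dot x x by have := dot_ge0 x; lra.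
have [mu [eig_mu mu_le]] := min_eigenvalue x symA x_gt0.
have := mu_le x; have := lb _ eig_mu; nra.
Qed.

Definition scalar_mx N (c : R) : Mat N := fun i j => if i == j then c else 0.

Lemma pucci_class_scalar N lam Lam : lam <= Lam -> pucci_class lam Lam (@scalar_mx N lam).
Proof.
move=> lam_le; split; first by move=> i j; rewrite /scalar_mx eq_sym.
move=> a [x [[i xi] eig]]; have := eig i.
rewrite (@sumI_delta _ _ i) => [|j ji]; last first.
  have /negbTE ij : i != j by apply/eqP => ij; apply: ji.
  by rewrite /scalar_mx ij Rmult_0_l.
rewrite /scalar_mx eqxx => E; have : (a - lam) * x i = 0 by lra.
by case/Rmult_integral => // ?; lra.
Qed.

Lemma pucci_plus_le N lam Lam (M : Mat N) c : lam <= Lam ->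
  (forall A, pucci_class lam Lam A -> trace (mat_mul A M) <= c) -> pucci_plus lam Lam M <= c.
Proof.
move=> lam_le ub.
have c_ub : is_upper_bound (pucci_values lam Lam M) c by move=> x [A [cA ->]]; apply: ub.
have values_nonempty : exists x, pucci_values lam Lam M x.
  exists (trace (mat_mul (@scalar_mx N lam) M)), (@scalar_mx N lam).
  by split => //; apply: pucci_class_scalar.
have [s s_lub] := completeness _ (ex_intro _ c c_ub) values_nonempty.
rewrite /pucci_plus; case: (epsilon_spec (inhabits 0) _ (ex_intro _ s s_lub)) => _.
exact.
Qed.

Lemma trace_mul_tensor N (A : Mat N) s w :
  trace (mat_mul A (mat_scale s (tensor w))) = s * qf A w.
Proof.
rewrite /trace /mat_mul /qf /dot /mv -sumI_scal; apply: eq_sumI => i.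
by rewrite -Rmult_assoc -sumI_scal; apply: eq_sumI => k; rewrite /mat_scale /tensor; ring.
Qed.

Lemma pucci_plus_neg_tensor N lam Lam c (w : Vec N) : 0 <= lam -> lam <= Lam -> 0 <= c ->
  pucci_plus lam Lam (mat_scale (- c) (tensor w)) <= 0.
Proof.
move=> lam_ge0 lam_le c_ge0; apply: pucci_plus_le => // A [symA eigA].
rewrite trace_mul_tensor.
have qf_ge0 : 0 <= qf A w.
  apply: Rle_trans (qf_ge_eigenvalue_lb symA (fun a ea => proj1 (eigA a ea)) w).
  exact: Rmult_le_pos (dot_ge0 w).
by have := Rmult_le_pos _ _ c_ge0 qf_ge0; lra.
Qed.

Section MatrixAlgebra.

Variable N : nat.
Implicit Types (M : Mat N) (p q : Vec N).

Lemma mat_add_sym M M' : Defs.symmetric M -> Defs.symmetric M' -> Defs.symmetric (mat_add M M').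
Proof. by move=> sM sM' i j; rewrite /mat_add sM sM'. Qed.

Lemma mat_scale_sym s M : Defs.symmetric M -> Defs.symmetric (mat_scale s M).
Proof. by move=> sM i j; rewrite /mat_scale sM. Qed.

Lemma tensor_sym p : Defs.symmetric (tensor p).
Proof. by move=> i j; rewrite /tensor Rmult_comm. Qed.

Lemma vnorm0 : vnorm (fun _ : 'I_N => 0) = 0.
Proof. by rewrite /vnorm (@eq_sumI _ _ (fun _ => 0)) ?sumI_const0 ?sqrt_0 // => i; lra. Qed.

Lemma linear_tensor_convex_comb (l : Vec N -> Mat N) t p q : linear_to_sym l ->
  mat_add (l (vec_add (vec_scale t p) (vec_scale (1 - t) q)))
          (tensor (vec_add (vec_scale t p) (vec_scale (1 - t) q)))
  = mat_add (mat_add (mat_scale t (mat_add (l p) (tensor p)))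
                     (mat_scale (1 - t) (mat_add (l q) (tensor q))))
            (mat_scale (- (t * (1 - t))) (tensor (vec_sub p q))).
Proof.
move=> [_ l_lin]; rewrite l_lin.
apply: functional_extensionality => i; apply: functional_extensionality => j.
by rewrite /mat_add /mat_scale /tensor /vec_add /vec_scale /vec_sub; ring.
Qed.

End MatrixAlgebra.

Section Operator.

Variables (N : nat) (F : Mat N -> Vec N -> R -> R).

Lemma F_subadditive A B p q u v : H3 F -> Defs.symmetric A -> Defs.symmetric B ->
  F (mat_add A B) (vec_add p q) (u + v) <= F A p u + F B q v.
Proof.
move=> h3 sA sB; have := proj2 (h3 _ _ (vec_add p q) q (u + v) v (mat_add_sym sA sB) sB).
have -> : mat_sub (mat_add A B) B = A.
  by apply: functional_extensionality => i; apply: functional_extensionality => j;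
     rewrite /mat_sub /mat_add; ring.
have -> : vec_sub (vec_add p q) q = p.
  by apply: functional_extensionality => i; rewrite /vec_sub /vec_add; ring.
have -> : u + v - v = u by ring.
lra.
Qed.

Lemma F_le_pucci_plus lam Lam gamma delta M p u :
  H0 F -> H1 lam Lam gamma delta F -> Defs.symmetric M ->
  F M p u <= pucci_plus lam Lam M + gamma * vnorm p + delta * Rabs u.
Proof.
move=> h0 h1 sM.
have := proj2 (h1 _ _ p (vec_scale 0 p) u (0 * u) sM (mat_scale_sym 0 sM)).
rewrite h0 ?Rmult_0_l; [|lra|exact: sM].
have -> : mat_sub M (mat_scale 0 M) = M.
  by apply: functional_extensionality => i; apply: functional_extensionality => j;
     rewrite /mat_sub /mat_scale; ring.
have -> : vec_sub p (vec_scale 0 p) = p.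
  by apply: functional_extensionality => i; rewrite /vec_sub /vec_scale; ring.
by rewrite !Rminus_0_r.
Qed.

End Operator.

Unset Implicit Arguments.

Theorem mainTheorem18 (N : nat) (lam Lam gamma delta : R)
  (F : Mat N -> Vec N -> R -> R) (l : Vec N -> Mat N) :
  0 < lam -> lam <= Lam -> 0 <= gamma -> 0 <= delta ->
  H0 F -> H1 lam Lam gamma delta F -> H3 F ->
  linear_to_sym l ->
  convex_fun (fun p => F (mat_add (l p) (tensor p)) p 1).
Proof.
move=> lam_gt0 lam_le _ _ h0 h1 h3 l_sym p q t t01 /=.
set X := fun r => mat_add (l r) (tensor r).
have symX r : Defs.symmetric (X r).
  by apply: mat_add_sym; [apply: (proj1 l_sym) | apply: tensor_sym].
set D := mat_scale (- (t * (1 - t))) (tensor (vec_sub p q)).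
have symD : Defs.symmetric D by apply/mat_scale_sym/tensor_sym.
have D_le0 : F D (fun _ => 0) 0 <= 0.
  have := F_le_pucci_plus (fun _ => 0) 0 h0 h1 symD.
  have c_ge0 : 0 <= t * (1 - t) by apply: Rmult_le_pos; lra.
  have := pucci_plus_neg_tensor (vec_sub p q) (Rlt_le _ _ lam_gt0) lam_le c_ge0.
  by rewrite -/D vnorm0 Rabs_R0; lra.
rewrite (linear_tensor_convex_comb t p q l_sym) -/(X p) -/(X q) -/D.
have := F_subadditive (vec_add (vec_scale t p) (vec_scale (1 - t) q)) (fun _ => 0)
          (t * 1 + (1 - t) * 1) 0 h3
          (mat_add_sym (mat_scale_sym t (symX p)) (mat_scale_sym (1 - t) (symX q))) symD.
have -> : t * 1 + (1 - t) * 1 + 0 = 1 by ring.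
have -> : vec_add (vec_add (vec_scale t p) (vec_scale (1 - t) q)) (fun _ => 0)
          = vec_add (vec_scale t p) (vec_scale (1 - t) q).
  by apply: functional_extensionality => i; rewrite /vec_add; ring.
have := F_subadditive (vec_scale t p) (vec_scale (1 - t) q) (t * 1) ((1 - t) * 1) h3
          (mat_scale_sym t (symX p)) (mat_scale_sym (1 - t) (symX q)).
rewrite !h0 //; lra.
Qed.
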